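(* For every object $V$ of $\mathcal{E}_q^{deg}$, the isotropic functor $iso_V$ is self-dual in $\mathcal{F}_{iso}$: there exists an isomorphism $\gamma:iso_V\xrightarrow{\simeq}D(iso_V)$ which is self-adjoint, i.e. $\gamma=D\gamma\circ\eta_{iso_V}$, where $\eta_F:F\to D^2F$ is the unit of the adjunction between $D$ and $D^{op}$.
   Context: $\mathcal{E}$: all $\mathbb{F}_2$-vector spaces; $(-)^*$ linear duality. $\mathcal{E}_q^{deg}$: objects finite-dimensional quadratic spaces over $\mathbb{F}_2$ (possibly degenerate), morphisms injective linear maps preserving quadratic forms. $\mathrm{Sp}(\mathcal{E}_q^{deg})$: same objects, morphisms spans $[V\leftarrow D\rightarrow W]$ up to iso of $D$, composed by pullback (intersection of images). $\mathcal{F}_{iso}=\mathrm{Func}(\mathrm{Sp}(\mathcal{E}_q^{deg}),\mathcal{E})$. Transposition $tr:\mathrm{Sp}(\mathcal{E}_q^{deg})^{op}\to\mathrm{Sp}(\mathcal{E}_q^{deg})$ sends $[V\leftarrow X\rightarrow W]$ to $[W\leftarrow X\rightarrow V]$; the duality $D:\mathcal{F}_{iso}^{op}\to\mathcal{F}_{iso}$ is $DF=(-)^*\circ F\circ tr^{op}$; $D$ is right adjoint to $D^{op}$ with unit $\eta_F:F\to D^2F$ (the canonical map to the double dual). $Q_V=\mathbb{F}_2[\mathrm{Hom}_{\mathrm{Sp}(\mathcal{E}_q^{deg})}(V,-)]$. Let $(\mathrm{Id}_V)^*\in DQ_V(V)=\mathbb{F}_2[\mathrm{End}(V)]^*$ be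 the linear form with value $1$ on $\mathrm{Id}_V$ and $0$ on every other basis element, and $a_V:Q_V\to DQ_V$ the morphism corresponding to it by the Yoneda lemma. The isotropic functor $iso_V$ is the image of $a_V$. *)

From mathcomp Require Import all_boot all_order all_algebra.
Set Implicit Arguments. Unset Strict Implicit. Unset Printing Implicit Defensive.
Import GRing.Theory.
Local Open Scope ring_scope.

Definition F2 : fieldType := 'F_2.

Definition polar n (q : 'rV[F2]_n -> F2) (x y : 'rV[F2]_n) : F2 :=
  q (x + y) - q x - q y.

Definition is_qform n (q : 'rV[F2]_n -> F2) : Prop :=
  (forall (a : F2) x, q (a *: x) = a ^+ 2 * q x) /\
  (forall (a : F2) x y z, polar q (a *: x + y) z = a * polar q x z + polar q y z).

Record qspace := QSpace {
  qdim : nat;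
  qform : 'rV[F2]_qdim -> F2;
  qformP : is_qform qform }.

Notation vec V := 'rV[F2]_(qdim V).

(** A span [V <- D -> W] of injective isometries, up to isomorphism of D,
    is the same thing as its image in V (+) W, i.e. a linear subspace S of
    V x W on which both projections are injective and such that
    q_V(x) = q_W(y) for (x,y) in S (D is then S with the induced form). *)
Definition is_span (V W : qspace) (S : {set vec V * vec W}) : bool :=
  [&& ((0, 0) \in S),
      [forall p in S, forall p' in S, (p.1 + p'.1, p.2 + p'.2) \in S],
      [forall a : F2, forall p in S, (a *: p.1, a *: p.2) \in S],
      [forall p in S, (p.1 == 0) ==> (p.2 == 0)],
      [forall p in S, (p.2 == 0) ==> (p.1 == 0)] &
      [forall p in S, @qform W p.2 == @qform V p.1]].

Definition Hom (V W : qspace) := {S : {set vec V * vec W} | is_span S}.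

Definition raw_id (V : qspace) : {set vec V * vec V} := [set (x, x) | x : vec V].

Definition raw_tr (V W : qspace) (S : {set vec V * vec W}) : {set vec W * vec V} :=
  [set (p.2, p.1) | p in S].

(** composition by pullback: g o f for f : V -> W, g : W -> X *)
Definition raw_comp (V W X : qspace) (T : {set vec W * vec X}) (S : {set vec V * vec W})
  : {set vec V * vec X} :=
  [set p | [exists y : vec W, ((p.1, y) \in S) && ((y, p.2) \in T)]].

Lemma raw_id_span V : is_span (raw_id V).
Proof.
rewrite /is_span; apply/and5P; split; last (apply/andP; split).
- by apply/imsetP; exists 0.
- apply/forall_inP => p /imsetP[x _ ->]; apply/forall_inP => p' /imsetP[y _ ->].
  by apply/imsetP; exists (x + y).
- apply/forallP => a; apply/forall_inP => p /imsetP[x _ ->].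
  by apply/imsetP; exists (a *: x).
- by apply/forall_inP => p /imsetP[x _ ->]; apply/implyP.
- by apply/forall_inP => p /imsetP[x _ ->]; apply/implyP.
- by apply/forall_inP => p /imsetP[x _ ->].
Qed.

Lemma raw_tr_span V W (S : {set vec V * vec W}) : is_span S -> is_span (raw_tr S).
Proof.
case/and5P=> S0 SD SZ S1 /andP[S2 Sq]; rewrite /is_span; apply/and5P; split; last (apply/andP; split).
- by apply/imsetP; exists (0, 0).
- apply/forall_inP => p /imsetP[[x y] Hp ->]; apply/forall_inP => p' /imsetP[[x' y'] Hp' ->].
  apply/imsetP; exists (x + x', y + y') => //.
  by move/forall_inP: SD => /(_ _ Hp)/forall_inP/(_ _ Hp').
- apply/forallP => a; apply/forall_inP => p /imsetP[[x y] Hp ->].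
  apply/imsetP; exists (a *: x, a *: y) => //.
  by move/forallP: SZ => /(_ a)/forall_inP/(_ _ Hp).
- by apply/forall_inP => p /imsetP[[x y] Hp ->]; move/forall_inP: S2 => /(_ _ Hp).
- by apply/forall_inP => p /imsetP[[x y] Hp ->]; move/forall_inP: S1 => /(_ _ Hp).
- apply/forall_inP => p /imsetP[[x y] Hp ->] /=.
  by move/forall_inP: Sq => /(_ _ Hp) /= /eqP ->.
Qed.

Lemma raw_comp_span V W X (T : {set vec W * vec X}) (S : {set vec V * vec W}) :
  is_span T -> is_span S -> is_span (raw_comp T S).
Proof.
case/and5P=> T0 TD TZ T1 /andP[T2 Tq]; case/and5P=> S0 SD SZ S1 /andP[S2 Sq].
rewrite /is_span; apply/and5P; split; last (apply/andP; split).
- by rewrite inE; apply/existsP; exists 0; rewrite S0 T0.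
- apply/forall_inP => p; rewrite inE => /existsP[y /andP[Hp1 Hp2]].
  apply/forall_inP => p'; rewrite inE => /existsP[y' /andP[Hp1' Hp2']].
  rewrite inE; apply/existsP; exists (y + y'); apply/andP; split.
  + by move/forall_inP: SD => /(_ _ Hp1)/forall_inP/(_ _ Hp1').
  + by move/forall_inP: TD => /(_ _ Hp2)/forall_inP/(_ _ Hp2').
- apply/forallP => a; apply/forall_inP => p; rewrite inE => /existsP[y /andP[Hp1 Hp2]].
  rewrite inE; apply/existsP; exists (a *: y); apply/andP; split.
  + by move/forallP: SZ => /(_ a)/forall_inP/(_ _ Hp1).
  + by move/forallP: TZ => /(_ a)/forall_inP/(_ _ Hp2).
- apply/forall_inP => p; rewrite inE => /existsP[y /andP[Hp1 Hp2]].
  apply/implyP => /eqP p10.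
  move/forall_inP: S1 => /(_ _ Hp1) /=; rewrite p10 eqxx /= => /eqP y0.
  by move/forall_inP: T1 => /(_ _ Hp2) /=; rewrite y0 eqxx.
- apply/forall_inP => p; rewrite inE => /existsP[y /andP[Hp1 Hp2]].
  apply/implyP => /eqP p20.
  move/forall_inP: T2 => /(_ _ Hp2) /=; rewrite p20 eqxx /= => /eqP y0.
  by move/forall_inP: S2 => /(_ _ Hp1) /=; rewrite y0 eqxx.
- apply/forall_inP => p; rewrite inE => /existsP[y /andP[Hp1 Hp2]].
  move/forall_inP: Sq => /(_ _ Hp1) /= /eqP <-.
  by move/forall_inP: Tq => /(_ _ Hp2).
Qed.

Definition hid (V : qspace) : Hom V V := exist _ (raw_id V) (raw_id_span V).
Definition htr (V W : qspace) (f : Hom V W) : Hom W V :=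
  exist _ (raw_tr (val f)) (raw_tr_span (valP f)).
Definition hcomp (V W X : qspace) (g : Hom W X) (f : Hom V W) : Hom V X :=
  exist _ (raw_comp (val g) (val f)) (raw_comp_span (valP g) (valP f)).

Record functor := Functor {
  Fobj :> qspace -> vectType F2;
  Fmor : forall V W : qspace, Hom V W -> 'Hom(Fobj V, Fobj W) }.

Definition ntrans (F G : functor) := forall W : qspace, 'Hom(F W, G W).

Definition natural (F G : functor) (g : ntrans F G) : Prop :=
  forall (V W : qspace) (h : Hom V W), (Fmor G h \o g V = g W \o Fmor F h)%VF.

Definition is_niso (F G : functor) (g : ntrans F G) : Prop :=
  natural g /\ forall W : qspace, bijective (fun_of_lfun (g W)).

Definition dualF (F : functor) : functor :=
  @Functor (fun W => ('Hom(F W, F2^o) : vectType F2))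
    (fun V W h => linfun (fun phi : 'Hom(F V, F2^o) => (phi \o Fmor F (htr h))%VF)).

Definition dualN (F G : functor) (g : ntrans F G) : ntrans (dualF G) (dualF F) :=
  fun W => linfun (fun phi : 'Hom(G W, F2^o) => (phi \o g W)%VF).

Definition etaN (F : functor) : ntrans F (dualF (dualF F)) :=
  fun W => linfun (fun v : F W => linfun (fun phi : 'Hom(F W, F2^o) => phi v)).

Definition ncomp (F G H : functor) (g : ntrans G H) (f : ntrans F G) : ntrans F H :=
  fun W => (g W \o f W)%VF.

(** * Q_V = F_2[Hom(V,-)] *)
Definition delta (T : finType) (t : T) : {ffun T -> F2^o} := [ffun s => (s == t)%:R].

Definition QF (V : qspace) : functor :=
  @Functor (fun W => ({ffun Hom V W -> F2^o} : vectType F2))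
    (fun W X h => linfun (fun c : {ffun Hom V W -> F2^o} =>
        \sum_(f : Hom V W) c f *: delta (hcomp h f))).

Definition idstar (V : qspace) : dualF (QF V) V :=
  linfun (fun c : {ffun Hom V V -> F2^o} => c (hid V)).

(** a_V : Q_V -> D Q_V, corresponding to (Id_V)^* by the Yoneda lemma *)
Definition aV (V : qspace) : ntrans (QF V) (dualF (QF V)) :=
  fun W => linfun (fun c : {ffun Hom V W -> F2^o} =>
    \sum_(f : Hom V W) c f *: Fmor (dualF (QF V)) f (idstar V)).

Definition iso_space (V W : qspace) : {vspace dualF (QF V) W} := limg (aV V W).

Definition isoF (V : qspace) : functor :=
  @Functor (fun W => (subvs_of (iso_space V W) : vectType F2))
    (fun W X h => linfun (fun x : subvs_of (iso_space V W) =>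
        vsproj (iso_space V X) (Fmor (dualF (QF V)) h (vsval x)))).

(** The pairing on Q_V(W) that sends spans f, g : V -> W to 1 exactly when
    tr(f) o g = Id_V is symmetric, and adjoint with respect to transposition:
    <f, tr(h) o g> = <h o f, g>.  The map a_V is this pairing seen as
    Q_V -> D Q_V; symmetry of a form makes the form it induces on its image
    well defined and nondegenerate, which gives gamma : iso_V -> D iso_V.
    Symmetry of gamma is self-adjointness, and adjointness of the pairing is
    naturality. *)
From HB Require Import structures.
From Pilot Require Import Defs.
From mathcomp Require Import all_boot all_order all_algebra.
Set Implicit Arguments. Unset Strict Implicit. Unset Printing Implicit Defensive.
Import GRing.Theory.
Local Open Scope ring_scope.

Section LinearAlgebra.
Variable K : fieldType.

Lemma linfunE_linear (aT rT : vectType K) (f : aT -> rT) (fL : linear f) x :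
  linfun f x = f x.
Proof.
pose L : {linear aT -> rT} := HB.pack f (GRing.isLinear.Build _ _ _ _ f fL).
exact: (lfunE L x).
Qed.

Lemma lfun_inj_bij (aT rT : vectType K) (f : 'Hom(aT, rT)) :
  injective f -> dim aT = dim rT -> bijective f.
Proof.
move=> /lker0P kf0 dim_eq; exists (f^-1%VF); first exact: lker0_lfunK.
have /eqP limgf : limg f == fullv.
  by rewrite eqEdim subvf dimvf -dim_eq limg_dim_eq ?dimvf //= (eqP kf0) capv0.
by move=> v; apply: limg_lfunVK; rewrite limgf memvf.
Qed.

Lemma linear_comp_lfunr (aT bT cT : vectType K) (M : 'Hom(aT, bT)) :
  linear (fun phi : 'Hom(bT, cT) => (phi \o M)%VF).
Proof. by move=> c phi psi; rewrite comp_lfunDl comp_lfunZl. Qed.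

Section SymmetricForm.
Variables (U : vectType K) (a : 'Hom(U, 'Hom(U, K^o))).
Hypothesis a_sym : forall u w, a u w = a w u.

Definition form_preimage (x : subvs_of (limg a)) : U := (a^-1)%VF (vsval x).

Lemma form_preimageK x : a (form_preimage x) = vsval x.
Proof. exact: (limg_lfunVK (subvsP x)). Qed.

(** [<a u, a w> := a u w], independent of the preimages since [a u w = a w u]. *)
Definition induced_form :
    'Hom(subvs_of (limg a), 'Hom(subvs_of (limg a), K^o)) :=
  linfun (fun x : subvs_of (limg a) =>
    (vsval x \o (a^-1 \o linfun (vsval : subvs_of (limg a) -> 'Hom(U, K^o))))%VF).

Lemma induced_formE x y : induced_form x y = a (form_preimage x) (form_preimage y).
Proof.
rewrite linfunE_linear; last by move=> c p q; rewrite linearP comp_lfunDl comp_lfunZl.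
by rewrite !comp_lfunE lfunE form_preimageK.
Qed.

Lemma induced_form_sym x y : induced_form x y = induced_form y x.
Proof. by rewrite !induced_formE a_sym. Qed.

Lemma induced_form_inj : injective induced_form.
Proof.
apply/lker0P/eqP/vspaceP => x; rewrite memv0 memv_ker; apply/eqP/eqP => [x0|->];
  last exact: linear0.
have ax0 : a (form_preimage x) = 0.
  apply/lfunP => u; rewrite zero_lfunE a_sym.
  have au_img : a u \in limg a by rewrite memv_img ?memvf.
  rewrite -(vsprojK au_img) -form_preimageK -induced_formE induced_form_sym.
  by rewrite x0 zero_lfunE.
by apply: val_inj; rewrite /= -form_preimageK ax0.
Qed.

Lemma induced_form_bij : bijective induced_form.
Proof. by apply: lfun_inj_bij; [exact: induced_form_inj | rewrite -[LHS]muln1]. Qed.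

End SymmetricForm.
End LinearAlgebra.

Lemma sum_pushforward (R : pzSemiRingType) (T T' : finType)
    (c : T -> R) (phi : T -> T') (G : T' -> R) :
  \sum_k (\sum_g c g * (k == phi g)%:R) * G k = \sum_g c g * G (phi g).
Proof.
under eq_bigr do rewrite mulr_suml.
rewrite exchange_big; apply: eq_bigr => g _.
rewrite (bigD1 (phi g)) //= eqxx mulr1 big1 ?addr0 // => k /negbTE ->.
by rewrite mulr0 mul0r.
Qed.

Lemma mem_raw_tr V W (S : {set vec V * vec W}) p :
  (p \in raw_tr S) = ((p.2, p.1) \in S).
Proof.
apply/imsetP/idP => [[q Sq ->] | Sp]; first by case: q Sq.
by exists (p.2, p.1) => //; case: p Sp.
Qed.

Lemma htrK V W (f : Defs.Hom V W) : htr (htr f) = f.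
Proof. by apply: val_inj; apply/setP => -[x y]; rewrite /= !mem_raw_tr. Qed.

Lemma htr_id V : htr (hid V) = hid V.
Proof.
apply: val_inj; apply/setP => -[x y]; rewrite /= mem_raw_tr /=.
by apply/imsetP/imsetP => -[z _ [-> ->]]; exists z.
Qed.

Lemma htr_comp V W X (g : Defs.Hom W X) (f : Defs.Hom V W) :
  htr (hcomp g f) = hcomp (htr f) (htr g).
Proof.
apply: val_inj; apply/setP => -[x y]; rewrite /= mem_raw_tr /= !inE /=.
by apply/existsP/existsP => -[z Hz]; exists z; move: Hz; rewrite !mem_raw_tr andbC.
Qed.

Lemma hcompA V W X Y (h : Defs.Hom X Y) (g : Defs.Hom W X) (f : Defs.Hom V W) :
  hcomp h (hcomp g f) = hcomp (hcomp h g) f.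
Proof.
apply: val_inj; apply/setP => -[x y]; rewrite /= !inE /=.
apply/existsP/existsP.
- case=> z /andP[]; rewrite inE => /existsP[w /andP[fxw gwz]] hzy.
  by exists w; rewrite fxw inE; apply/existsP; exists z; rewrite gwz.
- case=> w /andP[fxw]; rewrite inE => /existsP[z /andP[gwz hzy]].
  by exists z; rewrite hzy inE andbT; apply/existsP; exists w; rewrite fxw.
Qed.

Lemma dualF_morE (F : functor) W X (h : Defs.Hom W X) (phi : dualF F W) :
  Fmor (dualF F) h phi = (phi \o Fmor F (htr h))%VF.
Proof. by rewrite linfunE_linear //; apply: linear_comp_lfunr. Qed.

Lemma dualNE (F G : functor) (g : ntrans F G) W (phi : dualF G W) :
  dualN g W phi = (phi \o g W)%VF.
Proof. by rewrite linfunE_linear //; apply: linear_comp_lfunr. Qed.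

Lemma etaNE (F : functor) W (v : F W) (phi : 'Hom(F W, F2^o)) :
  etaN F W v phi = phi v.
Proof.
have ev_lin (w : F W) : linear (fun phi : 'Hom(F W, F2^o) => phi w).
  by move=> c p q; rewrite add_lfunE scale_lfunE.
rewrite linfunE_linear ?linfunE_linear // => c x y; apply/lfunP => p.
by rewrite add_lfunE scale_lfunE !linfunE_linear // linearP.
Qed.

Section IsotropicFunctor.
Variable V : qspace.

Lemma QF_morE W X (h : Defs.Hom W X) (u : QF V W) k :
  Fmor (QF V) h u k = \sum_f u f * (k == hcomp h f)%:R.
Proof.
rewrite linfunE_linear.
  by rewrite sum_ffunE; apply: eq_bigr => f _; rewrite !ffunE.
move=> c x y; rewrite scaler_sumr -big_split; apply: eq_bigr => f _ /=.
by rewrite !ffunE scalerDl scalerA.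
Qed.

Definition span_pairing W (f g : Defs.Hom V W) : F2 := (hid V == hcomp (htr f) g)%:R.

Lemma span_pairing_sym W (f g : Defs.Hom V W) : span_pairing f g = span_pairing g f.
Proof.
have tr_eq (f' g' : Defs.Hom V W) : hid V = hcomp (htr f') g' -> hid V = hcomp (htr g') f'.
  by move=> fg; rewrite -htr_id fg htr_comp htrK.
rewrite /span_pairing.
suff -> : (hid V == hcomp (htr f) g) = (hid V == hcomp (htr g) f) by [].
by apply/eqP/eqP => /tr_eq.
Qed.

Lemma span_pairing_adj W X (h : Defs.Hom W X) (f : Defs.Hom V W) (g : Defs.Hom V X) :
  span_pairing f (hcomp (htr h) g) = span_pairing (hcomp h f) g.
Proof. by rewrite /span_pairing htr_comp hcompA. Qed.

Lemma aVE W (u w : QF V W) :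
  aV V W u w = \sum_f u f * \sum_g w g * span_pairing f g.
Proof.
rewrite linfunE_linear; last first.
  move=> c x y; rewrite scaler_sumr -big_split; apply: eq_bigr => f _ /=.
  by rewrite !ffunE scalerDl scalerA.
rewrite sum_lfunE; apply: eq_bigr => f _.
rewrite scale_lfunE dualF_morE comp_lfunE linfunE_linear; last first.
  by move=> c x y; rewrite !ffunE.
by rewrite QF_morE.
Qed.

Lemma aV_sym W (u w : QF V W) : aV V W u w = aV V W w u.
Proof.
rewrite !aVE; under eq_bigr do rewrite mulr_sumr.
rewrite exchange_big; apply: eq_bigr => g _; rewrite mulr_sumr.
by apply: eq_bigr => f _; rewrite span_pairing_sym mulrCA.
Qed.

Lemma aV_adj W X (h : Defs.Hom W X) (u : QF V W) (v : QF V X) :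
  aV V W u (Fmor (QF V) (htr h) v) = aV V X (Fmor (QF V) h u) v.
Proof.
rewrite !aVE; under eq_bigr do under eq_bigr do rewrite QF_morE.
under [in RHS]eq_bigr do rewrite QF_morE.
rewrite (sum_pushforward u (hcomp h) (fun k => \sum_g v g * span_pairing k g)).
apply: eq_bigr => f _; congr (_ * _).
rewrite (sum_pushforward v (hcomp (htr h)) (span_pairing f)).
by apply: eq_bigr => g _; rewrite span_pairing_adj.
Qed.

Lemma aV_natural W X (h : Defs.Hom W X) (u : QF V W) :
  Fmor (dualF (QF V)) h (aV V W u) = aV V X (Fmor (QF V) h u).
Proof. by rewrite dualF_morE; apply/lfunP => v; rewrite comp_lfunE; apply: aV_adj. Qed.

Lemma isoF_morE W X (h : Defs.Hom W X) (x : isoF V W) :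
  vsval (Fmor (isoF V) h x) = aV V X (Fmor (QF V) h (form_preimage x)).
Proof.
rewrite linfunE_linear; last by move=> c p q; rewrite !linearP.
by rewrite vsprojK -form_preimageK aV_natural // memv_img // memvf.
Qed.

Definition iso_gamma : ntrans (isoF V) (dualF (isoF V)) :=
  fun W => induced_form (aV V W).

(** [induced_formE] at the canonical instances of [QF V], so that its
    right-hand side is matched by [aV_sym] and [aV_adj]. *)
Lemma iso_gammaE W (x y : isoF V W) :
  iso_gamma W x y = aV V W (form_preimage x) (form_preimage y).
Proof. exact: induced_formE. Qed.

Lemma iso_gamma_natural : natural iso_gamma.
Proof.
move=> W X h; apply/lfunP => x; apply/lfunP => y.
rewrite !comp_lfunE dualF_morE comp_lfunE !iso_gammaE [LHS]aV_sym.
by rewrite !form_preimageK !isoF_morE [LHS]aV_sym aV_adj.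
Qed.

End IsotropicFunctor.

Theorem proposition4p28 (V : qspace) :
  exists gamma : ntrans (isoF V) (dualF (isoF V)),
    is_niso gamma /\
    forall W : qspace,
      gamma W = ncomp (dualN gamma) (etaN (isoF V)) W.
Proof.
exists (iso_gamma V); split; first split.
- exact: iso_gamma_natural.
- by move=> W; apply: induced_form_bij; apply: aV_sym.
- move=> W; apply/lfunP => x; apply/lfunP => y.
  rewrite /ncomp comp_lfunE dualNE comp_lfunE etaNE.
  by apply: induced_form_sym; apply: aV_sym.
Qed.
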